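(* Let $A:\mathbb R_+\to\mathbb R^{M\times M}$ be continuous with $A(0)=0$, and let $Y$ be the unique solution of the linear matrix ODE $Y'(\tau)=A(\tau)Y(\tau)$, $Y(0)=I_M$. Suppose $Y''(\tau)=B(\tau)Y(\tau)$, where $B(\tau)$ is positive semidefinite for all $\tau\ge0$. Then $A(\tau)$ is positive semidefinite for all $\tau\ge0$.
   Context: A real square matrix $C$ is called positive semidefinite if $b^\top Cb\ge0$ for all vectors $b$; symmetry is not required. *)

From HB Require Import structures.
From mathcomp Require Import all_boot all_order all_algebra.
From mathcomp Require Import all_classical all_reals all_analysis.
Set Implicit Arguments. Unset Strict Implicit. Unset Printing Implicit Defensive.
Import Order.TTheory GRing.Theory Num.Theory.
Import numFieldNormedType.Exports.
Local Open Scope classical_set_scope.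
Local Open Scope ring_scope.

(* A real square matrix C is positive semidefinite if b^T C b >= 0 for all
   vectors b; symmetry is NOT required. *)
Definition psd (R : realType) (n : nat) (C : 'M[R]_n) : Prop :=
  forall b : 'cV[R]_n, 0 <= (b^T *m C *m b) 0 0.

(* Derivative of a real function f defined on R_+ = [0, +oo) at a point
   t >= 0: the limit of the difference quotient with h -> 0, h <> 0, t + h >= 0
   (so it is the usual two-sided derivative for t > 0 and the right
   derivative at t = 0). *)
Definition has_deriv_Rplus (R : realType) (f : R -> R) (t d : R) : Prop :=
  (fun h : R => h^-1 * (f (t + h) - f t))
    @ within [set h : R | 0 <= t + h] (0 : R)^' --> d.

Definition has_mxderiv_Rplus (R : realType) (n : nat)
  (F : R -> 'M[R]_n) (t : R) (D : 'M[R]_n) : Prop :=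
  forall i j, has_deriv_Rplus (fun s => F s i j) t (D i j).

(* For a fixed vector c let u = Y c.  Then f = <u, u'> vanishes at 0, because
   u'(0) = A(0) c = 0, and f' = |u'|^2 + <u, B u> >= 0; hence f >= 0 on R_+.
   Since (|u|^2)' = 2 f, also |Y(t) c| >= |c|, so every Y(t) is invertible, and
   c = Y(t)^-1 b turns f(t) >= 0 into b^T A(t) b >= 0. *)

From HB Require Import structures.
From mathcomp Require Import all_boot all_order all_algebra.
From mathcomp Require Import all_classical all_reals all_analysis.
From mathcomp Require Import ring.
Import Order.TTheory GRing.Theory Num.Theory.
Import numFieldNormedType.Exports.
Local Open Scope classical_set_scope.
Local Open Scope ring_scope.

Section DerivRplus.
Context {R : realType}.

Local Notation increments t := (within [set h : R | 0 <= t + h] (0 : R)^').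

Lemma increments_neq0 (t : R) : \forall h \near increments t, h != 0.
Proof. by apply: cvg_within; apply: withinT. Qed.

Lemma increments_cvg0 (t : R) : (fun h : R => h) @ increments t --> (0 : R).
Proof. by apply: cvg_trans (cvg_within _) _; apply: cvg_trans (cvg_within _) _. Qed.

Lemma has_deriv_Rplus_cst (t c : R) : has_deriv_Rplus (fun=> c) t 0.
Proof.
rewrite /has_deriv_Rplus.
under eq_fun do rewrite subrr mulr0.
exact: cvg_cst.
Qed.

Lemma has_deriv_Rplus_cvg {f : R -> R} {t d} : has_deriv_Rplus f t d ->
  (fun h => f (t + h)) @ increments t --> f t.
Proof.
move=> df.
have eq_f : {near increments t,
    (fun h => f t + h * (h^-1 * (f (t + h) - f t))) =1 (fun h => f (t + h))}.
  apply: filterS (increments_neq0 t) => h h0 /=.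
  by rewrite mulrA mulfV // mul1r addrC subrK.
apply: cvg_trans (near_eq_cvg eq_f) _.
have := cvgD (cvg_cst (f t)) (cvgM (increments_cvg0 t) df).
by rewrite mul0r addr0; apply.
Qed.

Lemma has_deriv_RplusD {f g : R -> R} {t a b} :
  has_deriv_Rplus f t a -> has_deriv_Rplus g t b ->
  has_deriv_Rplus (fun s => f s + g s) t (a + b).
Proof.
rewrite /has_deriv_Rplus => df dg.
under eq_fun do rewrite opprD addrACA mulrDr.
exact: cvgD.
Qed.

Lemma has_deriv_RplusM {f g : R -> R} {t a b} :
  has_deriv_Rplus f t a -> has_deriv_Rplus g t b ->
  has_deriv_Rplus (fun s => f s * g s) t (a * g t + f t * b).
Proof.
rewrite /has_deriv_Rplus => df dg.
have -> : (fun h => h^-1 * (f (t + h) * g (t + h) - f t * g t)) =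
    (fun h => h^-1 * (f (t + h) - f t) * g (t + h)
              + f t * (h^-1 * (g (t + h) - g t))).
  by apply/funext => h; ring.
apply: cvgD; apply: cvgM => //; last exact: cvg_cst.
exact: has_deriv_Rplus_cvg dg.
Qed.

Lemma has_deriv_Rplus_sum {I : Type} (r : seq I) {F : I -> R -> R} {D : I -> R} {t} :
  (forall i, has_deriv_Rplus (F i) t (D i)) ->
  has_deriv_Rplus (fun s => \sum_(i <- r) F i s) t (\sum_(i <- r) D i).
Proof.
move=> dF; elim: r => [|i r IHr].
  have -> : (fun s => \sum_(i <- [::]) F i s) = fun=> 0.
    by apply/funext => s; rewrite big_nil.
  by rewrite big_nil; exact: has_deriv_Rplus_cst.
have -> : (fun s => \sum_(j <- i :: r) F j s) = fun s => F i s + \sum_(j <- r) F j s.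
  by apply/funext => s; rewrite big_cons.
by rewrite big_cons; exact: has_deriv_RplusD.
Qed.

Lemma has_deriv_Rplus_is_derive {f : R -> R} {t d} :
  0 < t -> has_deriv_Rplus f t d -> is_derive t 1 f d.
Proof.
move=> t_gt0 df.
have near_t : (0 : R)^' [set h : R | 0 <= t + h].
  suff near0 : nbhs (0 : R) [set h : R | 0 <= t + h] by exact: cvg_within near0.
  apply/nbhs_ballP; exists t => //= h.
  rewrite /ball /= sub0r normrN => /ltrNnormlW ht.
  by rewrite -(subrr t) lerD2l ltW.
have df' : (fun h : R => h^-1 * (f (t + h) - f t)) @ (0 : R)^' --> d.
  by move=> P /df; apply: filterS2 near_t => h th; apply.
have quotE : (fun h : R => h^-1 *: ((f \o shift t) (h *: 1) - f t)) =
             (fun h : R => h^-1 * (f (t + h) - f t)).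
  apply/funext => h /=; have -> : h *: (1 : R) = h by exact: mulr1.
  by rewrite /shift /= (addrC h t).
have f_derivable : derivable f t 1 by rewrite /derivable quotE; apply/cvg_ex; exists d.
by apply: DeriveDef => //; rewrite /derive quotE; apply: cvg_lim.
Qed.

Lemma has_deriv_Rplus_cvg_right0 {f : R -> R} {d} :
  has_deriv_Rplus f 0 d -> f @ (0 : R)^'+ --> f 0.
Proof.
move=> /has_deriv_Rplus_cvg f_cvg P /f_cvg Pf.
have {}Pf : nbhs (0 : R) (fun h => h != 0 -> 0 <= 0 + h -> P (f (0 + h))) := Pf.
change (nbhs (0 : R) (fun h => 0 < h -> P (f h))).
by apply: filterS Pf => h; rewrite add0r => Ph h_gt0; apply: Ph; rewrite ?lt0r_neq0 ?ltW.
Qed.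

Lemma has_deriv_Rplus_ge0_homo {f d : R -> R} :
  (forall s, 0 <= s -> has_deriv_Rplus f s (d s)) ->
  (forall s, 0 <= s -> 0 <= d s) ->
  forall s t, 0 <= s -> s <= t -> f s <= f t.
Proof.
move=> df d_ge0.
have f'E (x : R) : x \in `]0, +oo[ -> is_derive x 1 f (d x).
  by rewrite in_itv /= andbT => x_gt0; exact: has_deriv_Rplus_is_derive (df x (ltW x_gt0)).
apply: ger0_derive1_ndecry.
- by move=> x /f'E [].
- move=> x x_gt0; rewrite derive1E; have [_ ->] := f'E x x_gt0.
  by apply: d_ge0; move: x_gt0; rewrite in_itv /= andbT => /ltW.
- apply: derivable_oy_Rcontinuous_within_itvcy; split; first by move=> x /f'E [].
  exact: has_deriv_Rplus_cvg_right0 (df 0 (lexx 0)).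
Qed.

End DerivRplus.

Section MxDerivRplus.
Context {R : realType}.

(* Rectangular [has_mxderiv_Rplus]; on square matrices the two are convertible. *)
Definition has_rmxderiv_Rplus {m n} (F : R -> 'M[R]_(m, n)) (t : R) (D : 'M[R]_(m, n)) :=
  forall i j, has_deriv_Rplus (fun s => F s i j) t (D i j).

Lemma has_rmxderiv_Rplus_tr {m n} {F : R -> 'M[R]_(m, n)} {t D} :
  has_rmxderiv_Rplus F t D -> has_rmxderiv_Rplus (fun s => (F s)^T) t D^T.
Proof.
move=> dF i j; rewrite mxE.
by have -> : (fun s => (F s)^T i j) = fun s => F s j i by apply/funext => s; rewrite mxE.
Qed.

Lemma has_rmxderiv_Rplus_mulmx {m n p} {F : R -> 'M[R]_(m, n)} {G : R -> 'M[R]_(n, p)} {t D E} :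
  has_rmxderiv_Rplus F t D -> has_rmxderiv_Rplus G t E ->
  has_rmxderiv_Rplus (fun s => F s *m G s) t (D *m G t + F t *m E).
Proof.
move=> dF dG i j; rewrite !mxE -big_split /=.
have -> : (fun s => (F s *m G s) i j) = fun s => \sum_k F s i k * G s k j.
  by apply/funext => s; rewrite mxE.
by apply: has_deriv_Rplus_sum => k; apply: has_deriv_RplusM.
Qed.

Lemma has_rmxderiv_Rplus_mulmxr {m n p} {F : R -> 'M[R]_(m, n)} {t D} (C : 'M[R]_(n, p)) :
  has_rmxderiv_Rplus F t D -> has_rmxderiv_Rplus (fun s => F s *m C) t (D *m C).
Proof.
move=> dF; rewrite -[D *m C]addr0 -(mulmx0 _ (F t)).
apply: has_rmxderiv_Rplus_mulmx => // i j; rewrite mxE.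
exact: has_deriv_Rplus_cst.
Qed.

Definition cvdot {n} (u v : 'cV[R]_n) : R := (u^T *m v) 0 0.

Lemma cvdotv0 {n} (u : 'cV[R]_n) : cvdot u 0 = 0.
Proof. by rewrite /cvdot mulmx0 mxE. Qed.

Lemma cvdotC {n} (u v : 'cV[R]_n) : cvdot u v = cvdot v u.
Proof. by rewrite /cvdot -[u in RHS]trmxK -trmx_mul [RHS]mxE. Qed.

Lemma cvdotvv {n} (u : 'cV[R]_n) : cvdot u u = \sum_i u i 0 ^+ 2.
Proof. by rewrite /cvdot mxE; apply: eq_bigr => i _; rewrite mxE expr2. Qed.

Lemma cvdotvv_ge0 {n} (u : 'cV[R]_n) : 0 <= cvdot u u.
Proof. by rewrite cvdotvv; apply: sumr_ge0 => i _; exact: sqr_ge0. Qed.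

Lemma cvdotvv_eq0 {n} (u : 'cV[R]_n) : (cvdot u u == 0) = (u == 0).
Proof.
apply/idP/idP => [|/eqP ->]; last exact/eqP/cvdotv0.
rewrite cvdotvv psumr_eq0 => [/allP u0|i _]; last exact: sqr_ge0.
apply/eqP/colP => i; rewrite mxE; apply/eqP.
by rewrite -sqrf_eq0 (implyP (u0 i _)) ?mem_index_enum.
Qed.

Lemma psdE {n} (C : 'M[R]_n) : psd C <-> forall b, 0 <= cvdot b (C *m b).
Proof. by rewrite /psd /cvdot; split=> C_psd b; rewrite ?mulmxA ?C_psd // -mulmxA C_psd. Qed.

Lemma has_deriv_Rplus_cvdot {n} {u v : R -> 'cV[R]_n} {t du dv} :
  has_rmxderiv_Rplus u t du -> has_rmxderiv_Rplus v t dv ->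
  has_deriv_Rplus (fun s => cvdot (u s) (v s)) t (cvdot du (v t) + cvdot (u t) dv).
Proof.
move=> du' dv'.
by have := has_rmxderiv_Rplus_mulmx (has_rmxderiv_Rplus_tr du') dv' 0 0; rewrite mxE.
Qed.

End MxDerivRplus.

Section LinearMatrixODE.
Context {R : realType} {M : nat} {A B Y Y1 : R -> 'M[R]_M}.
Hypotheses (hA0 : A 0 = 0) (hY0 : Y 0 = 1%:M)
  (hY' : forall t, 0 <= t -> has_mxderiv_Rplus Y t (Y1 t))
  (hODE : forall t, 0 <= t -> Y1 t = A t *m Y t)
  (hY'' : forall t, 0 <= t -> has_mxderiv_Rplus Y1 t (B t *m Y t))
  (hB : forall t, 0 <= t -> psd (B t)).

Lemma has_rmxderiv_Rplus_Ymx (c : 'cV[R]_M) {t} :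
  0 <= t -> has_rmxderiv_Rplus (fun s => Y s *m c) t (Y1 t *m c).
Proof. by move=> t0; exact: has_rmxderiv_Rplus_mulmxr (hY' t t0). Qed.

Lemma has_rmxderiv_Rplus_Y1mx (c : 'cV[R]_M) {t} :
  0 <= t -> has_rmxderiv_Rplus (fun s => Y1 s *m c) t (B t *m (Y t *m c)).
Proof. by move=> t0; rewrite mulmxA; exact: has_rmxderiv_Rplus_mulmxr (hY'' t t0). Qed.

Lemma cvdot_Ymx_Y1mx_ge0 (c : 'cV[R]_M) {t} :
  0 <= t -> 0 <= cvdot (Y t *m c) (Y1 t *m c).
Proof.
move=> t0.
have <- : cvdot (Y 0 *m c) (Y1 0 *m c) = 0.
  by rewrite hODE // hA0 !mul0mx cvdotv0.
apply: (has_deriv_Rplus_ge0_homo (f := fun s => cvdot (Y s *m c) (Y1 s *m c))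
  (d := fun s => cvdot (Y1 s *m c) (Y1 s *m c) + cvdot (Y s *m c) (B s *m (Y s *m c)))) => //.
- move=> s s0 /=.
  exact: has_deriv_Rplus_cvdot (has_rmxderiv_Rplus_Ymx c s0) (has_rmxderiv_Rplus_Y1mx c s0).
- by move=> s s0; have /psdE B_psd := hB s s0; rewrite addr_ge0 ?cvdotvv_ge0.
Qed.

Lemma cvdot_Ymx_ge (c : 'cV[R]_M) {t} :
  0 <= t -> cvdot c c <= cvdot (Y t *m c) (Y t *m c).
Proof.
move=> t0; rewrite -{1 2}[c]mul1mx -hY0.
apply: (has_deriv_Rplus_ge0_homo (f := fun s => cvdot (Y s *m c) (Y s *m c))
  (d := fun s => cvdot (Y1 s *m c) (Y s *m c) + cvdot (Y s *m c) (Y1 s *m c))) => //.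
- move=> s s0 /=.
  exact: has_deriv_Rplus_cvdot (has_rmxderiv_Rplus_Ymx c s0) (has_rmxderiv_Rplus_Ymx c s0).
- by move=> s s0; rewrite cvdotC addr_ge0 ?cvdot_Ymx_Y1mx_ge0.
Qed.

Lemma Y_unitmx {t} : 0 <= t -> Y t \in unitmx.
Proof.
move=> t0; rewrite -unitmx_tr unitmxE unitfE; apply/negP => /det0P[w w_neq0 wY].
have Yw : Y t *m w^T = 0 by rewrite -[Y t]trmxK -trmx_mul wY trmx0.
have : cvdot w^T w^T == 0.
  by rewrite eq_le cvdotvv_ge0 andbT (le_trans (cvdot_Ymx_ge _ t0)) // Yw cvdotv0.
by rewrite cvdotvv_eq0 trmx_eq0 (negbTE w_neq0).
Qed.

End LinearMatrixODE.

Theorem lemma7p5 (R : realType) (M : nat) (A B Y Y1 : R -> 'M[R]_M)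
  (hAcont : forall i j, {within [set t : R | 0 <= t], continuous (fun t => A t i j)})
  (hA0 : A 0 = 0)
  (hY0 : Y 0 = 1%:M)
  (hY' : forall t : R, 0 <= t -> has_mxderiv_Rplus Y t (Y1 t))
  (hODE : forall t : R, 0 <= t -> Y1 t = A t *m Y t)
  (hY'' : forall t : R, 0 <= t -> has_mxderiv_Rplus Y1 t (B t *m Y t))
  (hB : forall t : R, 0 <= t -> psd (B t)) :
  forall t : R, 0 <= t -> psd (A t).
Proof.
move=> t t0; apply/psdE => b.
have Yt_unit := Y_unitmx hA0 hY0 hY' hODE hY'' hB t0.
have YtK : Y t *m (invmx (Y t) *m b) = b by rewrite mulmxA mulmxV // mul1mx.
have := cvdot_Ymx_Y1mx_ge0 hA0 hY' hODE hY'' hB (invmx (Y t) *m b) t0.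
by rewrite hODE // -mulmxA !YtK.
Qed.
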